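(* Let $U\subseteq\mathbb{R}$ be a nonempty open set and $A\subseteq\mathbb{R}$ a set that is both meager and Lebesgue null. Then there are pairwise disjoint sets $D_k\subseteq U$ and reals $x_k$ ($k\in\omega$) such that $\bigcup_{k\in\omega}D_k$ is nowhere dense and $A\subseteq\bigcup_{k\in\omega}(D_k+x_k)$.
   Context: $D+x=\{d+x:d\in D\}$. *)

From HB Require Import structures.
From mathcomp Require Import all_boot all_order all_algebra.
From mathcomp Require Import all_classical all_reals all_analysis.
Set Implicit Arguments. Unset Strict Implicit. Unset Printing Implicit Defensive.
Import Order.TTheory GRing.Theory Num.Theory.
Import numFieldTopology.Exports numFieldNormedType.Exports.
Local Open Scope classical_set_scope.
Local Open Scope ring_scope.

Definition nowhere_dense (T : topologicalType) (S : set T) : Prop :=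
  (closure S)° = set0.

Definition meager (T : topologicalType) (A : set T) : Prop :=
  exists F : nat -> set T, (forall n, nowhere_dense (F n)) /\ A `<=` \bigcup_n F n.

Definition translate (R : realType) (D : set R) (x : R) : set R :=
  [set d + x | d in D].

From HB Require Import structures.
From mathcomp Require Import all_boot all_order all_algebra.
From mathcomp Require Import all_classical all_reals all_analysis.
From mathcomp Require Import measurable_realfun lra.
Set Implicit Arguments.
Unset Strict Implicit.
Unset Printing Implicit Defensive.
Import Order.TTheory GRing.Theory Num.Theory.
Import numFieldTopology.Exports numFieldNormedType.Exports.
Local Open Scope classical_set_scope.
Local Open Scope ring_scope.

(* A null set is covered by open intervals of arbitrarily small total length.
   Fix a ball around a point of U and cut it into consecutive blocks
   [s_n, s_(n+1)].  The pieces of A `&` F_n (F_n nowhere dense) cut out by the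
   intervals of a cover of total length at most s_(n+1) - s_n can be slid, in
   order, next to one another inside the n-th block; each lands in its own
   half-open slot.  Sets in distinct slots of a nondecreasing sequence of
   endpoints are disjoint, and a union of nowhere dense sets lying in such
   slots is nowhere dense, since every interval has an initial subinterval
   meeting at most one slot.  Enumerating the pairs (n, i) yields the D_k. *)

Lemma nowhere_denseS (T : topologicalType) (S S' : set T) :
  S `<=` S' -> nowhere_dense S' -> nowhere_dense S.
Proof.
move=> SS' S'nd; apply/seteqP; split => //.
by rewrite -S'nd; exact/interiorS/closureS.
Qed.

Lemma translateK (R : realType) (S : set R) (t : R) :
  translate (translate S t) (- t) = S.
Proof.
apply/seteqP; split => [_ [_ [z Sz <-] <-]|z Sz]; first by rewrite addrK.
by exists (z + t); [exists z | rewrite addrK].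
Qed.

Section RealLine.
Variable R : realType.
Implicit Types (S : set R) (a b c d : R).

Lemma negligible_itv_cover (A : set R) (e : R) : 0 < e ->
  (@lebesgue_measure R).-negligible A ->
  exists a b : nat -> R, [/\ forall i, a i <= b i,
    A `<=` \bigcup_i [set z | a i < z < b i] &
    forall n, \sum_(i < n) (b i - a i) <= e].
Proof.
move=> e0 /negligible_outer_measure; rewrite outer_measure_open_itv_cover => A0.
have fin_inf : ereal_inf [set \big[+%E/0]_(0 <= k <oo) wlength idfun (F k)
  | F in open_itv_cover A] \is a fin_num by rewrite A0.
have [_ [F [Fitv AF] <-]] := lb_ereal_inf_adherent e0 fin_inf.
rewrite A0 add0e => Fe; have [ab Fab] := choice Fitv.
exists (fun i => (ab i).1), (fun i => Num.max (ab i).1 (ab i).2); split.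
- by move=> i; rewrite le_max lexx.
- move=> z /AF [k _]; rewrite Fab /= in_itv /= => /andP[z1 z2].
  by exists k => //=; rewrite z1 lt_max z2 orbT.
move=> n; rewrite -lee_fin -sumEFin; apply: le_trans (ltW Fe).
apply: le_trans (nneseries_lim_ge n (fun i _ _ => wlength_ge0 _ _)).
rewrite big_mkord; apply: lee_sum => i _; rewrite Fab wlength_itv /=.
case: ltP => [/ltW ab_le|ba]; first by rewrite max_r.
by rewrite max_l ?subrr // -lee_fin.
Qed.

Definition itv_nowhere_dense S := forall a b, a < b ->
  exists c d, [/\ a <= c, c < d, d <= b & forall z, c < z < d -> ~ S z].

Lemma itv_nowhere_dense_translate S y :
  itv_nowhere_dense S -> itv_nowhere_dense (translate S y).
Proof.
move=> Snd a b ab; have [|c [d [ac cd db cdS]]] := Snd (a - y) (b - y).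
  by rewrite ltrD2r.
exists (c + y), (d + y); split; [lra | lra | lra |].
move=> z /andP[cz zd] [w Sw wz]; apply: (cdS w) => //.
by rewrite -(ltrD2r y c) -(ltrD2r y w d) wz cz.
Qed.

Lemma nowhere_denseP S : nowhere_dense S <-> itv_nowhere_dense S.
Proof.
split=> [Snd a b ab|Snd].
- have [w /= mw Sw] : exists2 w, ball ((a + b) / 2) ((b - a) / 2) w &
      ~ closure S w.
    apply: contrapT => noW; suff : (closure S)° ((a + b) / 2) by rewrite Snd.
    apply/nbhs_ballP; exists ((b - a) / 2) => /=; first lra.
    by move=> w mw; apply: contrapT => Sw; apply: noW; exists w.
  have [e e0 eS] : exists2 e, 0 < e & forall z, ball w e z -> ~ S z.
    apply: contrapT => noE; apply: Sw => B /nbhs_ballP [e e0 eB].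
    apply: contrapT => SB; apply: noE; exists e => // z wz Sz.
    by apply: SB; exists z; split => //; exact: eB.
  move: mw; rewrite -ball_normE /= ltr_distlC => /andP[aw wb].
  have e1 : Num.min (b - w) e <= b - w by rewrite ge_min lexx.
  have e2 : Num.min (b - w) e <= e by rewrite ge_min lexx orbT.
  have e3 : 0 < Num.min (b - w) e by rewrite lt_min e0 andbT subr_gt0; lra.
  exists w, (w + Num.min (b - w) e); split; [lra | lra | lra |].
  move=> z /andP[wz zd]; apply: eS.
  by rewrite -ball_normE /= ltr_distlC; apply/andP; split; lra.
- apply/seteqP; split => // m /nbhs_ballP [e /= e0 eS].
  have [|c [d [ac cd db cdS]]] := Snd (m - e) (m + e); first lra.
  have cdS_closure : closure S ((c + d) / 2).
    by apply: eS; rewrite -ball_normE /= ltr_distlC; apply/andP; split; lra.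
  have [|z [Sz]] := cdS_closure _ (nbhsx_ballx ((c + d) / 2) ((d - c) / 2) _).
    lra.
  rewrite -ball_normE /= ltr_distlC => /andP[z1 z2].
  by apply: (cdS z) => //; apply/andP; split; lra.
Qed.

Section Slots.
Variables (p : nat -> R) (E : nat -> set R).
Hypothesis p_nd : nondecreasing_seq p.
Hypothesis E_slot : forall k, E k `<=` [set z | p k < z <= p k.+1].

Lemma slots_disjoint i j : i <> j -> E i `&` E j = set0.
Proof.
move=> ij; apply/seteqP; split => // z.
move=> [/E_slot/andP[i1 i2] /E_slot/andP[j1 j2]].
case: (ltngtP i j) => [/p_nd|/p_nd|] //; lra.
Qed.

(* Any interval has an initial piece met by at most one slot: the one ending
   at the first [p m] to the right of its left endpoint. *)
Lemma slot_isolation a b : a < b -> exists a' k,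
  a < a' <= b /\ forall j z, j <> k -> a < z < a' -> ~ E j z.
Proof.
move=> ab; case: (pselect (exists m, a < p m)) => [/ex_minnP [m am m_min]|].
  have b1 : Num.min b (p m) <= b by rewrite ge_min lexx.
  have b2 : Num.min b (p m) <= p m by rewrite ge_min lexx orbT.
  exists (Num.min b (p m)), m.-1; split; first by rewrite b1 lt_min ab am.
  move=> j z jm /andP[az zb] /E_slot/andP[jz zj].
  have [/p_nd|jlt] := leqP m j; first lra.
  have jm1 : (j.+1 < m)%N.
    by rewrite ltn_neqAle jlt andbT; apply/eqP => mj; apply: jm; rewrite -mj.
  have : p j.+1 <= a by rewrite leNgt; apply/negP => /m_min; rewrite leqNgt jm1.
  lra.
move=> noP; exists b, 0%N; split; first by rewrite lexx ab.
move=> j z _ /andP[az _] /E_slot/andP[_ zj].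
by apply: noP; exists j.+1; lra.
Qed.

Lemma itv_nowhere_dense_bigcup_slots :
  (forall k, itv_nowhere_dense (E k)) -> itv_nowhere_dense (\bigcup_k E k).
Proof.
move=> End a b ab; have [a' [k [/andP[aa' a'b] isol]]] := slot_isolation ab.
have [c [d [ac cd da' cdE]]] := End k a a' aa'.
exists c, d; split => //; first lra.
move=> z /andP[cz zd] [j _]; have [->|jk] := eqVneq j k.
  by apply: cdE; rewrite cz zd.
by apply: isol => //; [exact/eqP | apply/andP; split; lra].
Qed.

End Slots.

Definition packing (s : R) (a b : nat -> R) (i : nat) :=
  s + \sum_(j < i) (b j - a j).

Section Packing.
Variables (s t : R) (a b : nat -> R).
Hypothesis ab_le : forall i, a i <= b i.
Hypothesis lengths_le : forall n, \sum_(i < n) (b i - a i) <= t - s.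

Local Notation P := (packing s a b).

Lemma packingS i : P i.+1 = P i + (b i - a i).
Proof. by rewrite /packing big_ord_recr addrA. Qed.

Lemma packing_nd : nondecreasing_seq P.
Proof.
by apply/nondecreasing_seqP => i; rewrite packingS lerDl subr_ge0.
Qed.

Lemma packing_ge i : s <= P i.
Proof. by rewrite lerDl sumr_ge0 // => j _; rewrite subr_ge0. Qed.

Lemma packing_le i : P i <= t.
Proof. by rewrite -lerBrDl lengths_le. Qed.

Lemma translate_packing (S : set R) i : S `<=` [set z | a i < z < b i] ->
  translate S (P i - a i) `<=` [set z | P i < z <= P i.+1].
Proof.
move=> Sab _ [z /Sab /andP[az zb] <-]; rewrite packingS.
by apply/andP; split; lra.
Qed.

End Packing.

Lemma bounded_increasing_seq c e : 0 < e -> exists s : nat -> R,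
  [/\ s 0%N = c, forall n, s n < s n.+1 & forall n, s n < c + e].
Proof.
move=> e0; exists (fun n => c + e - e / 2 ^+ n).
have half_pos n : 0 < e / 2 ^+ n by rewrite divr_gt0 ?exprn_gt0.
split=> [|n|n]; first by rewrite expr0 divr1 addrK.
  have := half_pos n.+1; rewrite exprS invfM mulrA; lra.
by have := half_pos n; lra.
Qed.

Lemma doubly_indexed_cover (U A : set R) :
  open U -> U !=set0 -> meager A -> (@lebesgue_measure R).-negligible A ->
  exists (E : nat -> nat -> set R) (y : nat -> nat -> R), [/\
    forall n i, E n i `<=` U,
    forall n i m j, (n, i) <> (m, j) -> E n i `&` E m j = set0,
    nowhere_dense (\bigcup_n \bigcup_i E n i) &
    A `<=` \bigcup_n \bigcup_i translate (E n i) (y n i)].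
Proof.
move=> oU [c Uc] [F [Fnd AF]] nA.
have [e /= e0 eU] := (nbhs_ballP _ _).1 (oU c Uc).
have [s [s0 sS s_lt]] := bounded_increasing_seq c e0.
have s_nd : nondecreasing_seq s by apply/nondecreasing_seqP => n; exact/ltW.
have /choice [ab cover] : forall n, exists ab : (nat -> R) * (nat -> R),
    [/\ forall i, ab.1 i <= ab.2 i,
         A `<=` \bigcup_i [set z | ab.1 i < z < ab.2 i]
       & forall k, \sum_(i < k) (ab.2 i - ab.1 i) <= s n.+1 - s n].
  move=> n; have [|a [b]] := negligible_itv_cover (e := s n.+1 - s n) _ nA.
    by rewrite subr_gt0.
  by exists (a, b).
pose a n := (ab n).1; pose b n := (ab n).2.
pose P n := packing (s n) (a n) (b n).
pose E n i :=
  translate (A `&` F n `&` [set z | a n i < z < b n i]) (P n i - a n i).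
have E_slot n i : E n i `<=` [set z | P n i < z <= P n i.+1].
  by apply: translate_packing => z [].
have E_block n i : E n i `<=` [set z | s n < z <= s n.+1].
  have [ab_le _ len] := cover n.
  have Pi_ge : s n <= P n i := packing_ge (s n) ab_le i.
  have Pi_le : P n i.+1 <= s n.+1 := packing_le len i.+1.
  by move=> z /E_slot /andP[z1 z2]; apply/andP; split; lra.
have B_block n : \bigcup_i E n i `<=` [set z | s n < z <= s n.+1].
  by move=> z [i _ /E_block].
exists E, (fun n i => - (P n i - a n i)); split.
- move=> n i z /E_block /andP[z1 z2]; apply: eU.
  have := s_lt n.+1; have : c <= s n by rewrite -s0 s_nd.
  by rewrite -ball_normE /= ltr_distlC => *; apply/andP; split; lra.
- move=> n i m j; have [<- nij|nm _] := eqVneq n m.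
    have [ab_le _ _] := cover n.
    apply: (slots_disjoint (packing_nd (s n) ab_le) (E_slot n)) => ij.
    by apply: nij; rewrite ij.
  apply/seteqP; split => // z [Ez Ez'].
  rewrite -(slots_disjoint s_nd B_block (_ : n <> m)); last exact/eqP.
  by split; [exists i | exists j].
- apply/nowhere_denseP/(itv_nowhere_dense_bigcup_slots s_nd B_block) => n.
  have [ab_le _ _] := cover n.
  apply: (itv_nowhere_dense_bigcup_slots (packing_nd (s n) ab_le) (E_slot n)).
  move=> i; apply/itv_nowhere_dense_translate/nowhere_denseP.
  by apply: nowhere_denseS (Fnd n) => z [[]].
move=> z Az; have [n _ Fz] := AF z Az.
have [_ /(_ z Az) [i _ zab] _] := cover n.
by exists n => //; exists i => //; rewrite translateK.
Qed.

End RealLine.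

Theorem mainTheorem17 (R : realType) (U A : set R) :
  open U -> U !=set0 ->
  meager A -> (@lebesgue_measure R).-negligible A ->
  exists (D : nat -> set R) (x : nat -> R),
    (forall k, D k `<=` U) /\
    (forall i j, i <> j -> D i `&` D j = set0) /\
    nowhere_dense (\bigcup_k D k) /\
    A `<=` \bigcup_k translate (D k) (x k).
Proof.
move=> oU U0 mA nA.
have [E [y [EU E_disj E_nd AE]]] := doubly_indexed_cover oU U0 mA nA.
pose D k := if @pickle_inv (nat * nat)%type k is Some (n, i) then E n i
            else set0.
pose x k := if @pickle_inv (nat * nat)%type k is Some (n, i) then y n i
            else 0.
exists D, x; split; [|split; [|split]].
- by move=> k; rewrite /D; case: pickle_inv => [[n i]|].
- move=> k l; have := @pickle_invK (nat * nat)%type l.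
  have := @pickle_invK (nat * nat)%type k; rewrite /D.
  case: pickle_inv => [[n i] /= <-|_]; last by rewrite set0I.
  case: pickle_inv => [[m j] /= <- kl|_]; last by rewrite setI0.
  by apply: E_disj => nimj; apply: kl; rewrite nimj.
- apply: nowhere_denseS E_nd => z [k _]; rewrite /D.
  by case: pickle_inv => [[n i] Ez|//]; exists n => //; exists i.
move=> z /AE [n _ [i _ zE]]; exists (pickle (n, i)) => //.
by rewrite /D /x pickleK_inv.
Qed.
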